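(* Let $D$ and $D'$ be minimized DFAs over the same alphabet with $S(D)=S(D')$. Then $D\cong_I D'$.
   Context: All DFAs are complete and all states are reachable; a DFA is \emph{minimized} if it is the minimal DFA for its language (no two distinct states $p\ne q$ have $L(p)=L(q)$). For languages, $L\sim L'$ means $L\triangle L'$ is finite; $[L]$ is the $\sim$-class of $L$. For a state $q$ of $D=(Q,\Sigma,\delta,q_0,A)$, $L(q)$ is the language recognized by $(Q,\Sigma,\delta,q,A)$, and $S(D)=\{[L(q)]:q\in Q\}$. The \emph{infinite part} $I(D)$ is the set of states $q$ with $\{w:\delta(q_0,w)=q\}$ infinite. $D\cong_I D'$ means there is a bijection $f:I(D)\to I(D')$ with $q\in A\iff f(q)\in A'$ and $f(\delta(q,c))=\delta'(f(q),c)$ for all $q\in I(D)$, $c\in\Sigma$. *)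

From mathcomp Require Import all_boot.
Set Implicit Arguments. Unset Strict Implicit. Unset Printing Implicit Defensive.

Record dfa (Sigma : finType) := DFA {
  state : finType;
  delta : state -> Sigma -> state;
  start : state;
  accept : {set state}
}.

Section DFA.
Variable Sigma : finType.
Implicit Types (D : dfa Sigma).

Definition delta_star D (q : state D) (w : seq Sigma) : state D :=
  foldl (@delta _ D) q w.

Definition lang := seq Sigma -> Prop.

Definition lang_of D (q : state D) : lang :=
  fun w => delta_star q w \in accept D.

Definition finite_lang (L : lang) : Prop :=
  exists s : seq (seq Sigma), forall w, L w -> w \in s.

Definition lang_sim (L L' : lang) : Prop :=
  finite_lang (fun w => ~ (L w <-> L' w)).

Definition reachable D : Prop :=
  forall q : state D, exists w, delta_star (start D) w = q.

Definition minimized D : Prop :=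
  forall p q : state D, p <> q -> ~ (forall w, lang_of p w <-> lang_of q w).

(* S(D) = S(D'), unfolded: every class [L(q)] of D is a class [L(q')] of D'
   and conversely *)
Definition same_S D D' : Prop :=
  (forall q : state D, exists q' : state D', lang_sim (lang_of q) (lang_of q')) /\
  (forall q' : state D', exists q : state D, lang_sim (lang_of q) (lang_of q')).

Definition in_infinite_part D (q : state D) : Prop :=
  ~ finite_lang (fun w => delta_star (start D) w = q).

Definition iso_I D D' : Prop :=
  exists f : state D -> state D',
    [/\ (forall q, in_infinite_part q -> in_infinite_part (f q)),
        (forall p q, in_infinite_part p -> in_infinite_part q -> f p = f q -> p = q),
        (forall q', in_infinite_part q' -> exists2 q, in_infinite_part q & f q = q'),
        (forall q, in_infinite_part q -> (q \in accept D) = (f q \in accept D')) &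
        (forall q c, in_infinite_part q -> f (delta q c) = delta (f q) c)].

End DFA.

From mathcomp Require Import all_boot.
From Stdlib Require Import Classical ClassicalEpsilon.
From mathcomp Require Import zify.

(* Two languages at finite symmetric difference agree on every suffix of a
   long enough word, so a state of D reached by a long word is
   language-equivalent to a state of D'; since I(D) contains exactly the
   states reached by arbitrarily long words, the equivalent state lies in
   I(D') as well.  Minimality makes this partner unique, and the partner map
   is the required isomorphism: acceptance and transitions are preserved
   because language equivalence is a congruence. *)

Set Implicit Arguments. Unset Strict Implicit.

Section Languages.
Variable Sigma : finType.
Implicit Types (D : dfa Sigma) (L : lang Sigma).

Definition same_lang D D' (p : state D) (p' : state D') :=
  forall w, lang_of p w <-> lang_of p' w.

Lemma same_lang_sym D D' (p : state D) (p' : state D') :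
  same_lang p p' -> same_lang p' p.
Proof. by move=> H w; rewrite H. Qed.

Lemma same_lang_trans D1 D2 D3 (p1 : state D1) (p2 : state D2) (p3 : state D3) :
  same_lang p1 p2 -> same_lang p2 p3 -> same_lang p1 p3.
Proof. by move=> H12 H23 w; rewrite H12. Qed.

Lemma delta_star_cat D (p : state D) u v :
  delta_star p (u ++ v) = delta_star (delta_star p u) v.
Proof. by rewrite /delta_star foldl_cat. Qed.

Lemma lang_of_delta_star D (p : state D) u w :
  lang_of (delta_star p u) w = lang_of p (u ++ w).
Proof. by rewrite /lang_of delta_star_cat. Qed.

Lemma same_lang_delta_star D D' (p : state D) (p' : state D') u :
  same_lang p p' -> same_lang (delta_star p u) (delta_star p' u).
Proof. by move=> H w; rewrite !lang_of_delta_star. Qed.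

Lemma same_lang_accept D D' (p : state D) (p' : state D') :
  same_lang p p' -> (p \in accept D) = (p' \in accept D').
Proof. by move=> /(_ [::]) H; apply/idP/idP => /H. Qed.

Lemma minimized_same_lang D (p q : state D) :
  minimized D -> same_lang p q -> p = q.
Proof. by move=> Hm H; apply: NNPP => /Hm; apply. Qed.

Lemma finite_lang_bounded L : finite_lang L -> exists n, forall w, L w -> size w <= n.
Proof.
move=> [s Hs]; exists (\max_(w <- s) size w) => w /Hs Hw.
exact: (bigmaxn_sup_seq _ Hw).
Qed.

Lemma bounded_lang_finite L n : (forall w, L w -> size w <= n) -> finite_lang L.
Proof.
move=> Hn; exists (flatten [seq [seq tval t | t : k.-tuple Sigma] | k <- iota 0 n.+1]).
move=> w /Hn Hw; apply/flattenP.
exists [seq tval t | t : (size w).-tuple Sigma]; first by apply/mapP; exists (size w); rewrite ?mem_iota.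
by apply/mapP; exists (in_tuple w); rewrite ?mem_enum.
Qed.

Lemma lang_sim_sym L L' : lang_sim L L' -> lang_sim L' L.
Proof. by move=> [s Hs]; exists s => w Hw; apply: Hs => H; apply: Hw; tauto. Qed.

Lemma lang_sim_eventually_same D D' (p : state D) (p' : state D') :
  lang_sim (lang_of p) (lang_of p') ->
  exists n, forall u, n < size u -> same_lang (delta_star p u) (delta_star p' u).
Proof.
move=> /finite_lang_bounded [n Hn]; exists n => u Hu w.
rewrite !lang_of_delta_star; apply: NNPP => /Hn.
by rewrite size_cat; lia.
Qed.

Lemma in_infinite_partP D (q : state D) :
  in_infinite_part q <-> forall n, exists2 u, delta_star (start D) u = q & n < size u.
Proof.
split=> [HI n | Hlong Hfin].
  apply: NNPP => Hshort; apply: HI; apply: (@bounded_lang_finite _ n) => u Hu.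
  by rewrite leqNgt; apply/negP => Hlt; apply: Hshort; exists u.
have [n Hn] := finite_lang_bounded Hfin.
have [u Hu Hlt] := Hlong n.
by have := Hn u Hu; rewrite leqNgt Hlt.
Qed.

End Languages.

Section Partner.
Variables (Sigma : finType) (D D' : dfa Sigma).
Hypotheses (reachD' : reachable D') (minD' : minimized D').

(* The partner of q is q0·w for a long word w reaching q; any other long word
   reaching q leads from q0 to an equivalent, hence (by minimality) the same
   state, and prefixing a word reaching q0 keeps it long. *)
Lemma infinite_part_partner (q0 : state D') :
  lang_sim (lang_of (start D)) (lang_of q0) ->
  forall q : state D, in_infinite_part q ->
  exists2 q' : state D', same_lang q q' & in_infinite_part q'.
Proof.
move=> Hsim q /in_infinite_partP Hlong.
have [N HN] := lang_sim_eventually_same Hsim.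
have [w Hw HwN] := Hlong N.
have Hq : same_lang q (delta_star q0 w) by rewrite -Hw; apply: HN.
exists (delta_star q0 w) => //; apply/in_infinite_partP => n.
have [u Hu Hun] := Hlong (N + n).
have Hqu : delta_star q0 u = delta_star q0 w.
  apply: minimized_same_lang minD' _.
  apply: same_lang_trans Hq; rewrite -Hu; apply/same_lang_sym/HN; lia.
have [z Hz] := reachD' q0.
by exists (z ++ u); rewrite ?delta_star_cat ?Hz ?Hqu // size_cat; lia.
Qed.

Definition partner (q : state D) : state D' :=
  epsilon (inhabits (start D')) (same_lang q).

Lemma partner_eq (q : state D) (q' : state D') : same_lang q q' -> partner q = q'.
Proof.
move=> Hq; have := epsilon_spec (inhabits (start D')) (same_lang q) (ex_intro _ q' Hq).
by move=> /same_lang_sym/same_lang_trans/(_ Hq); apply: minimized_same_lang minD'.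
Qed.

End Partner.

Lemma iso_I_of_partners (Sigma : finType) (D D' : dfa Sigma) :
  minimized D -> minimized D' ->
  (forall q : state D, in_infinite_part q ->
     exists2 q' : state D', same_lang q q' & in_infinite_part q') ->
  (forall q' : state D', in_infinite_part q' ->
     exists2 q : state D, same_lang q q' & in_infinite_part q) ->
  iso_I D D'.
Proof.
move=> minD minD' partnerD partnerD'.
have partnerP (q : state D) : in_infinite_part q -> same_lang q (partner D' q).
  by move=> /partnerD [q' Hq _]; rewrite (partner_eq minD' Hq).
exists (partner D'); split.
- by move=> q /partnerD [q' Hq HI]; rewrite (partner_eq minD' Hq).
- move=> p q /partnerP Hp /partnerP Hq Hpq; apply: minimized_same_lang minD _.
  by apply: same_lang_trans Hp _; rewrite Hpq; apply: same_lang_sym.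
- by move=> q' /partnerD' [q Hq HI]; exists q; rewrite ?(partner_eq minD' Hq).
- by move=> q /partnerP /same_lang_accept.
- move=> q c /partnerP Hq; apply: (partner_eq minD').
  exact: (same_lang_delta_star [:: c] Hq).
Qed.

Theorem mainTheorem6 (Sigma : finType) (D D' : dfa Sigma) :
  reachable D -> reachable D' ->
  minimized D -> minimized D' ->
  same_S D D' ->
  iso_I D D'.
Proof.
move=> reachD reachD' minD minD' [simD simD'].
apply: (iso_I_of_partners minD minD').
- have [q0 Hq0] := simD (start D).
  by move=> q; apply: (infinite_part_partner reachD' minD' Hq0).
- move=> q' HI'; have [q0 Hq0] := simD' (start D').
  have [q Hq HI] := infinite_part_partner reachD minD (lang_sim_sym Hq0) HI'.
  by exists q => //; apply: same_lang_sym.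
Qed.
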